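(* Let $P$ be a poset and let $2\leq\alpha,\beta<\omega$. Then $P$ is $(\alpha,\beta)$-representable if and only if $P\models\psi_{(\alpha-1)(\beta-1)n}$ for all $n\in\omega$.
   Context: A poset $P$ is $(\alpha,\beta)$-representable if there is a set $X$ and an order embedding $h:P\to\wp(X)$ ($\wp(X)$ ordered by inclusion) such that whenever $S\subseteq P$ with $|S|<\alpha$ and $\bigwedge S$ exists in $P$ then $h(\bigwedge S)=\bigcap h[S]$ (with $\bigcap\emptyset=X$), and whenever $T\subseteq P$ with $|T|<\beta$ and $\bigvee T$ exists in $P$ then $h(\bigvee T)=\bigcup h[T]$. The sentences: signature with one binary relation $\leq$; $\vec{x}_k=(x_1,\ldots,x_k)$. For $1\leq k<\omega$: $J_k(\vec{x}_k,y)$ holds under assignment $v$ iff $v(y)$ is the join of $\{v(x_1),\ldots,v(x_k)\}$, $M_k(\vec{x}_k,y)$ iff $v(y)$ is their meet; $C_k(\vec{x}_k,y)=\bigvee_{i=1}^k(y=x_i)$, $D_k=\neg C_k$; $C_{km}(\vec{x}_k,\vec{y}_m)$ holds iff $\{v(y_j)\}\subseteq\{v(x_i)\}$. Let $\sigma_k(\vec{x}_k,c)=\exists z(C_k(\vec{x}_k,z)\wedge z\leq c)$, $\tau_{kr}(\vec{x}_k,\vec{a}_r,c)=C_{kr}(\vec{x}_k,\vec{a}_r)\wedge M_r(\vec{a}_r,c)$, $\rho_{ks}(\vec{x}_k,\vec{b}_s)=\exists z(C_k(\vec{x}_k,z)\wedge J_s(\vec{b}_s,z))$. Define $\phi_{krs0}(\vec{x}_k,y)=D_k(\vec{x}_k,y)$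 and $\phi_{krs(n+1)}(\vec{x}_k,y)=\forall\vec{a}_r\forall\vec{b}_s\forall c\Big(\big(\sigma_k(\vec{x}_k,c)\to\phi_{(k+1)rsn}(\vec{x}_k,c,y)\big)\wedge\big(\tau_{kr}(\vec{x}_k,\vec{a}_r,c)\to\phi_{(k+1)rsn}(\vec{x}_k,c,y)\big)\wedge\big(\rho_{ks}(\vec{x}_k,\vec{b}_s)\to\bigvee_{i=1}^s\phi_{(k+1)rsn}(\vec{x}_k,b_i,y)\big)\Big)$, and $\psi_{rsn}=\forall x\forall y(\neg(x\leq y)\to\phi_{1rsn}(x,y))$ for $1\leq r,s<\omega$, $n\in\omega$. *)

From mathcomp Require Import all_boot all_order.
Set Implicit Arguments. Unset Strict Implicit. Unset Printing Implicit Defensive.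
Import Order.Theory.
Local Open Scope order_scope.

Section Defs.
Context {d : Order.disp_t} {P : porderType d}.

Definition is_meet (S : P -> Prop) (m : P) : Prop :=
  (forall s, S s -> m <= s) /\ (forall w, (forall s, S s -> w <= s) -> w <= m).

Definition is_join (S : P -> Prop) (m : P) : Prop :=
  (forall s, S s -> s <= m) /\ (forall w, (forall s, S s -> s <= w) -> m <= w).

Definition card_lt (S : P -> Prop) (n : nat) : Prop :=
  exists l : seq P, (size l < n)%N /\ forall x, S x <-> x \in l.

Definition representable (alpha beta : nat) : Prop :=
  exists (X : Type) (h : P -> X -> Prop),
    (forall p q : P, p <= q <-> (forall x, h p x -> h q x)) /\
    (forall (S : P -> Prop) (m : P), card_lt S alpha -> is_meet S m ->
       forall x, h m x <-> (forall s, S s -> h s x)) /\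
    (forall (T : P -> Prop) (m : P), card_lt T beta -> is_join T m ->
       forall x, h m x <-> (exists t, T t /\ h t x)).

(* Semantics of phi_{k r s n}(x_1..x_k, y): xs is the list (x_1,...,x_k),
   so k = size xs; the extended tuple (x_1..x_k, c) is rcons xs c. *)
Fixpoint phi (r s n : nat) (xs : seq P) (y : P) : Prop :=
  match n with
  | 0 => y \notin xs
  | n'.+1 =>
      forall (a : 'I_r -> P) (b : 'I_s -> P) (c : P),
        ((exists z, z \in xs /\ z <= c) -> phi r s n' (rcons xs c) y) /\
        (((forall j, a j \in xs) /\ is_meet (fun w => exists j, w = a j) c) ->
            phi r s n' (rcons xs c) y) /\
        ((exists z, z \in xs /\ is_join (fun w => exists j, w = b j) z) ->
            exists i : 'I_s, phi r s n' (rcons xs (b i)) y)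
  end.

Definition psi (r s n : nat) : Prop :=
  forall x y : P, ~ (x <= y) -> phi r s n [:: x] y.

End Defs.

(* Soundness: given a representation [h] and a point [pt] of [h x] outside [h y],
   the elements [p] with [h p pt] form a prime filter: upward closed, closed
   under meets of at most [alpha - 1] elements and prime for joins of at most
   [beta - 1] elements.  Every move of the game coded by [phi] (add an element
   above one already chosen, add the meet of chosen elements, or pick a joinand
   of a chosen element) can be answered inside such a filter, and the filter
   never contains [y], so [phi] holds at every depth.
   Completeness: if [phi] holds for [x, y] at every depth, Zorn's lemma gives a
   maximal set of elements that can be added to [x] without losing [phi]; by
   maximality it is a prime filter containing [x] but not [y].  The prime
   filters then serve as the points of a representation. *)

From mathcomp Require Import all_boot all_order.
From mathcomp Require classical_sets.
From Stdlib Require Import Classical.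
Set Implicit Arguments. Unset Strict Implicit. Unset Printing Implicit Defensive.
Import Order.Theory.
Local Open Scope order_scope.

Section PrimeFilters.
Context {d : Order.disp_t} {P : porderType d}.
Variables r s : nat.

Definition range_of (I : Type) (a : I -> P) (w : P) : Prop := exists j, w = a j.

(* Tuples indexed by ['I_r] cover the nonempty meets of fewer than [r.+1]
   elements; the empty meet (top) and empty join (bottom) are accounted for by
   [prime_filter_inhabited] and [prime_filter_proper]. *)
Record prime_filter (F : P -> Prop) : Prop := PrimeFilter {
  prime_filter_inhabited : exists z, F z;
  prime_filter_proper : exists w, ~ F w;
  prime_filter_up : forall p q, F p -> p <= q -> F q;
  prime_filter_meet : forall (a : 'I_r -> P) c,
    (forall j, F (a j)) -> is_meet (range_of a) c -> F c;
  prime_filter_join : forall (b : 'I_s -> P) z,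
    F z -> is_join (range_of b) z -> exists i, F (b i) }.

Lemma subset_rcons2 (xs ys : seq P) c :
  {subset xs <= ys} -> {subset rcons xs c <= rcons ys c}.
Proof.
by move=> sub w; rewrite !mem_rcons !inE => /orP[->|/sub->]; rewrite ?orbT.
Qed.

Lemma phi_subset n (xs ys : seq P) y :
  {subset xs <= ys} -> phi r s n ys y -> phi r s n xs y.
Proof.
elim: n xs ys => [|n IH] xs ys sub /=; first by apply: contra => /sub.
move=> H a b c; have [Hsigma [Htau Hrho]] := H a b c; split; [|split].
- move=> [z [zx zc]]; apply: IH (Hsigma _); first exact: subset_rcons2.
  by exists z; split; first exact: sub.
- move=> [Ha Hm]; apply: IH (Htau _); first exact: subset_rcons2.
  by split=> // j; apply: sub.
- move=> [z [zx zb]]; have [i Hi] := Hrho (ex_intro _ z (conj (sub _ zx) zb)).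
  by exists i; apply: IH Hi; exact: subset_rcons2.
Qed.

Lemma phi_succ n (xs : seq P) y z :
  z \in xs -> phi r s n.+1 xs y -> phi r s n xs y.
Proof.
elim: n xs z => [|n IH] xs z zx /=.
  move=> /(_ (fun _ => z) (fun _ => z) z) [Hsigma _].
  have := Hsigma (ex_intro _ z (conj zx (lexx z))).
  by rewrite mem_rcons inE negb_or => /andP[].
have c_in c : c \in rcons xs c by rewrite mem_rcons mem_head.
move=> H a b c; have [Hsigma [Htau Hrho]] := H a b c; split; [|split].
- by move=> hz; apply: IH (c_in c) (Hsigma hz).
- by move=> hz; apply: IH (c_in c) (Htau hz).
- by move=> /Hrho[i Hi]; exists i; apply: IH (c_in (b i)) Hi.
Qed.

Lemma phi_le m n (xs : seq P) y z : (n <= m)%N -> z \in xs ->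
  phi r s m xs y -> phi r s n xs y.
Proof.
move=> /subnK <- zx; elim: (m - n)%N => [//|k IH].
by rewrite addSn => /(phi_succ zx).
Qed.

Lemma phi_of_prime_filter n F (xs : seq P) y : prime_filter F -> ~ F y ->
  (forall z, z \in xs -> F z) -> phi r s n xs y.
Proof.
move=> [_ _ Fup Fmeet Fjoin] nFy.
elim: n xs => [|n IH] xs Fxs /=; first by apply/negP => /Fxs.
have Frcons c : F c -> forall z, z \in rcons xs c -> F z.
  by move=> Fc z; rewrite mem_rcons inE => /orP[/eqP->|/Fxs].
move=> a b c; split; [|split].
- by move=> [z [/Fxs Fz zc]]; apply/IH/Frcons/(Fup _ _ Fz zc).
- by move=> [Fa Hm]; apply/IH/Frcons/(Fmeet a) => // j; apply: Fxs.
- by move=> [z [/Fxs Fz /(Fjoin b) [//|i Fi]]]; exists i; apply/IH/Frcons.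
Qed.

Definition phi_all (xs : seq P) (y : P) : Prop := forall n, phi r s n xs y.

Lemma phi_all_subset (xs ys : seq P) y :
  {subset xs <= ys} -> phi_all ys y -> phi_all xs y.
Proof. by move=> sub H n; apply: phi_subset (H n). Qed.

Lemma phi_all_sigma (xs : seq P) y z c : phi_all xs y -> z \in xs -> z <= c ->
  phi_all (rcons xs c) y.
Proof.
by move=> H zx zc n; apply: (H n.+1 (fun _ => c) (fun _ => c) c).1; exists z.
Qed.

Lemma phi_all_tau (xs : seq P) y (a : 'I_r -> P) c : phi_all xs y ->
  (forall j, a j \in xs) -> is_meet (range_of a) c -> phi_all (rcons xs c) y.
Proof. by move=> H ax ac n; apply: (H n.+1 a (fun _ => c) c).2.1. Qed.

(* If each [b i] failed at some depth [n_i], all would fail at the depth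
   [\max_i n_i], which exists as there are finitely many; this contradicts
   [phi] one level higher. *)
Lemma phi_all_rho (xs : seq P) y (b : 'I_s -> P) z : phi_all xs y -> z \in xs ->
  is_join (range_of b) z -> exists i, phi_all (rcons xs (b i)) y.
Proof.
move=> H zx zb; apply: NNPP => none.
have /fin_all_exists [depth bad] :
    forall i, exists n, ~ phi r s n (rcons xs (b i)) y.
  by move=> i; apply: not_all_ex_not => Hi; apply: none; exists i.
have [i Hi] := (H (\max_i depth i)%N.+1 (fun _ => z) b z).2.2
  (ex_intro _ z (conj zx zb)).
have bi : b i \in rcons xs (b i) by rewrite mem_rcons mem_head.
by apply: (bad i); apply: phi_le bi Hi; apply: leq_bigmax.
Qed.

Section Lindenbaum.
Variables x y : P.

Definition consistent (B : P -> Prop) : Prop :=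
  forall l, (forall z, z \in l -> B z) -> phi_all (x :: l) y.

Lemma consistent_maximal : phi_all [:: x] y ->
  exists A, consistent A /\ forall B, classical_sets.proper A B -> ~ consistent B.
Proof.
move=> hxy; apply: classical_sets.Zorn_bigcup => F Fcons Ftot l lF.
suff [->|[X FX lX]] : l = [::] \/ exists2 X, F X & forall z, z \in l -> X z.
- exact: hxy.
- exact: Fcons FX _ lX.
elim: l lF => [|w l IH] lF; first by left.
have [X0 FX0 X0w] : exists2 X, F X & X w by apply: lF; rewrite mem_head.
right; case: IH => [z zl|->|[X1 FX1 lX1]].
- by apply: lF; rewrite inE zl orbT.
- by exists X0 => // z; rewrite inE => /eqP->.
- case: (Ftot _ _ FX0 FX1) => sub; [exists X1|exists X0] => // z;
    rewrite inE => /orP[/eqP->|/lX1]; by [|apply: sub].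
Qed.

Variable A : P -> Prop.
Hypotheses (consA : consistent A)
  (maxA : forall B, classical_sets.proper A B -> ~ consistent B).

Lemma maximal_mem c :
  (forall l, (forall z, z \in l -> A z) -> phi_all (rcons (x :: l) c) y) -> A c.
Proof.
move=> Hc; apply: NNPP => nAc.
apply: (maxA (B := fun w => A w \/ w = c)).
  by split=> [w Aw|/(_ c (or_intror erefl))//]; left.
move=> l lB; pose l' := [seq w <- l | w != c].
have /Hc : forall z, z \in l' -> A z.
  by move=> z; rewrite mem_filter => /andP[zc /lB[//|/eqP]]; rewrite (negPf zc).
apply: phi_all_subset => w; rewrite mem_rcons !inE mem_filter.
by case: (w =P c) => [->|_]; rewrite ?eqxx.
Qed.

Lemma maximal_x : A x.
Proof.
apply: maximal_mem => l /consA; apply: phi_all_subset => w.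
by rewrite mem_rcons !inE orbA orbb.
Qed.

Lemma maximal_not_y : ~ A y.
Proof.
move=> Ay; have /(_ 0%N) : phi_all [:: x; y] y.
  by apply: consA => z; rewrite inE => /eqP->.
by rewrite /= !inE eqxx orbT.
Qed.

Lemma maximal_up p q : A p -> p <= q -> A q.
Proof.
move=> Ap pq; apply: maximal_mem => l lA.
have Hp : phi_all (x :: p :: l) y.
  by apply: consA => z; rewrite inE => /orP[/eqP->|/lA].
have p_in : p \in x :: p :: l by rewrite !inE eqxx orbT.
apply: phi_all_subset (phi_all_sigma Hp p_in pq).
by apply: subset_rcons2 => w; rewrite !inE => /orP[]->; rewrite ?orbT.
Qed.

Lemma maximal_meet (a : 'I_r -> P) c : (forall j, A (a j)) ->
  is_meet (range_of a) c -> A c.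
Proof.
move=> Aa ac; apply: maximal_mem => l lA.
pose la := [seq a j | j <- enum 'I_r].
have Ha : phi_all (x :: la ++ l) y.
  by apply: consA => z; rewrite mem_cat => /orP[/mapP[j _ ->]|/lA].
have a_in j : a j \in x :: la ++ l by rewrite inE mem_cat map_f ?mem_enum ?orbT.
apply: phi_all_subset (phi_all_tau Ha a_in ac).
by apply: subset_rcons2 => w; rewrite !inE mem_cat => /orP[]->; rewrite ?orbT.
Qed.

Lemma maximal_join (b : 'I_s -> P) z : A z -> is_join (range_of b) z ->
  exists i, A (b i).
Proof.
move=> Az zb; apply: NNPP => none.
have /fin_all_exists2 [wit witA bad] : forall i, exists2 l,
    (forall w, w \in l -> A w) & ~ phi_all (rcons (x :: l) (b i)) y.
  move=> i; apply: NNPP => Hl; apply: none; exists i; apply: maximal_mem => l lA.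
  by apply: NNPP => ng; apply: Hl; exists l.
pose L := flatten [seq wit i | i <- enum 'I_s].
have LA w : w \in L -> A w by move=> /flatten_mapP[i _ /witA].
have Hz : phi_all (x :: z :: L) y.
  by apply: consA => w; rewrite inE => /orP[/eqP->|/LA].
have z_in : z \in x :: z :: L by rewrite !inE eqxx orbT.
have [i Hi] := phi_all_rho Hz z_in zb.
apply/(bad i)/(phi_all_subset _ Hi)/subset_rcons2 => w.
rewrite !inE => /orP[->//|wi].
have wL : w \in L by apply/flatten_mapP; exists i; rewrite ?mem_enum.
by rewrite wL !orbT.
Qed.

End Lindenbaum.

Lemma separating_prime_filter x y : phi_all [:: x] y ->
  exists F, [/\ prime_filter F, F x & ~ F y].
Proof.
move=> /consistent_maximal [A [consA maxA]]; exists A.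
have Ax := maximal_x consA maxA; have nAy := maximal_not_y consA.
split=> //; split; first (by exists x); first (by exists y).
- exact: maximal_up consA maxA.
- exact: maximal_meet consA maxA.
- exact: maximal_join consA maxA.
Qed.

Definition representation (alpha beta : nat) (X : Type) (h : P -> X -> Prop) :=
  [/\ forall p q : P, p <= q <-> (forall x, h p x -> h q x),
      forall (S : P -> Prop) m, card_lt S alpha -> is_meet S m ->
        forall x, h m x <-> (forall t, S t -> h t x)
    & forall (T : P -> Prop) m, card_lt T beta -> is_join T m ->
        forall x, h m x <-> (exists t, T t /\ h t x)].

Lemma representableP alpha beta : representable (P := P) alpha beta <->
  exists (X : Type) (h : P -> X -> Prop), representation alpha beta h.
Proof.
split=> [[X [h [emb [meet join]]]]|[X [h [emb meet join]]]]; by exists X, h.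
Qed.

Lemma card_lt_range k (a : 'I_k -> P) : card_lt (range_of a) k.+1.
Proof.
exists [seq a j | j <- enum 'I_k]; rewrite size_map size_enum_ord; split=> // w.
by split=> [[j ->]|/mapP[j _ ->]]; [rewrite map_f ?mem_enum | exists j].
Qed.

Lemma card_lt_inhabited_range k (S : P -> Prop) z0 : card_lt S k.+1 -> S z0 ->
  exists a : 'I_k -> P, forall w, S w <-> range_of a w.
Proof.
move=> [l [/[!ltnS] lk Sl]] Sz0; exists (fun j => nth z0 l j) => w.
rewrite Sl; split.
- move=> wl; have wk : (index w l < k)%N.
    by apply: leq_trans lk; rewrite index_mem.
  by exists (Ordinal wk); rewrite nth_index.
- move=> [j ->]; have [jl|lj] := ltnP j (size l); first exact: mem_nth.
  by rewrite nth_default // -Sl.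
Qed.

Lemma is_meet_ext (S S' : P -> Prop) m :
  (forall w, S w <-> S' w) -> is_meet S m -> is_meet S' m.
Proof.
move=> SS' [lb glb]; split=> [w /SS'|w wlb]; first exact: lb.
by apply: glb => t /SS'; apply: wlb.
Qed.

Lemma is_join_ext (S S' : P -> Prop) m :
  (forall w, S w <-> S' w) -> is_join S m -> is_join S' m.
Proof.
move=> SS' [ub lub]; split=> [w /SS'|w wub]; first exact: ub.
by apply: lub => t /SS'; apply: wub.
Qed.

Lemma point_prime_filter X (h : P -> X -> Prop) pt x y :
  representation r.+1 s.+1 h -> h x pt -> ~ h y pt -> prime_filter (h^~ pt).
Proof.
move=> [emb meet join] hx nhy; split; first (by exists x); first (by exists y).
- by move=> p q hp /emb /(_ pt hp).
- move=> a c ha ac; apply/(meet _ _ (card_lt_range a) ac) => _ [j ->]; exact: ha.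
- move=> b z hz zb.
  by have /(join _ _ (card_lt_range b) zb) [_ [[i ->] hi]] := hz; exists i.
Qed.

Lemma representable_psi :
  representable (P := P) r.+1 s.+1 -> forall n, psi (P := P) r s n.
Proof.
move=> /representableP [X [h rep]] n x y nxy.
have [pt [hx nhy]] : exists pt, h x pt /\ ~ h y pt.
  have [emb _ _] := rep; apply: NNPP => none; apply/nxy/emb => pt hx.
  by apply: NNPP => nhy; apply: none; exists pt.
apply: (phi_of_prime_filter _ (point_prime_filter rep hx nhy) nhy).
by move=> z; rewrite inE => /eqP->.
Qed.

Lemma prime_filters_representable :
    (forall x y : P, ~ x <= y -> exists F, [/\ prime_filter F, F x & ~ F y]) ->
  representable (P := P) r.+1 s.+1.
Proof.
move=> sep; apply/representableP.
exists {F : P -> Prop | prime_filter F}, (fun p F => sval F p); split.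
- move=> p q; split=> [pq [F Fpf] /= Fp|le]; first exact: prime_filter_up Fp pq.
  apply: NNPP => npq; have [F [Fpf Fp nFq]] := sep _ _ npq.
  exact/nFq/(le (exist _ F Fpf)).
- move=> S m Sr mS [F [[z Fz] _ Fup Fmeet _]] /=; split=> [Fm t St|FS].
    exact: Fup Fm (mS.1 t St).
  have [[z0 Sz0]|Sempty] := classic (exists z0, S z0).
    have [a Sa] := card_lt_inhabited_range Sr Sz0.
    apply: (Fmeet a) => [j|]; first by apply/FS/Sa; exists j.
    exact: is_meet_ext mS.
  apply: Fup Fz _; apply: mS.2 => t St; case: Sempty; by exists t.
- move=> T m Ts mT [F [_ [w nFw] Fup _ Fjoin]] /=.
  split=> [Fm|[t [Tt Ft]]]; last exact: Fup Ft (mT.1 t Tt).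
  have [[z0 Tz0]|Tempty] := classic (exists z0, T z0).
    have [b Tb] := card_lt_inhabited_range Ts Tz0.
    have [i Fi] := Fjoin b m Fm (is_join_ext Tb mT).
    by exists (b i); split=> //; apply/Tb; exists i.
  case: nFw; apply: Fup Fm _; apply: mT.2 => t Tt; case: Tempty; by exists t.
Qed.

Lemma psi_representable :
  (forall n, psi (P := P) r s n) -> representable (P := P) r.+1 s.+1.
Proof.
move=> hpsi; apply: prime_filters_representable => x y nxy.
by apply: separating_prime_filter => n; apply: hpsi.
Qed.

End PrimeFilters.

Theorem theorem5p5 (d : Order.disp_t) (P : porderType d) (alpha beta : nat) :
  (2 <= alpha)%N -> (2 <= beta)%N ->
  (@representable d P alpha beta <->
   forall n : nat, @psi d P (alpha - 1) (beta - 1) n).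
Proof.
case: alpha => // r _; case: beta => // s _; rewrite !subn1 /=.
by split; [apply: representable_psi | apply: psi_representable].
Qed.
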